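(* Let $R$ be a semisimple ring and $(A,C)$ an almost-Koszul pair over $R$. If $A$ and $C$ are left locally finite, then the pair $({}^{*\text{-gr}}C,{}^{*\text{-gr}}A)$ is almost-Koszul (over $R^{\mathrm{op}}$). Similarly, if $A$ and $C$ are right locally finite, then $(C^{*\text{-gr}},A^{*\text{-gr}})$ is almost-Koszul.
   Context: $\otimes=\otimes_R$. A connected graded $R$-ring is an $\mathbb N$-graded algebra $A=\bigoplus A^n$ in $R$-bimodules with $A^0=R$, multiplication components $\mu^{p,q}$; a connected graded $R$-coring is an $\mathbb N$-graded coalgebra $C=\bigoplus C_n$ in $R$-bimodules with $C_0=R$ and components $\Delta_{p,q}(c)=\sum c_{1,p}\otimes c_{2,q}$. An almost-Koszul pair $(A,C)$ consists of such $A$, $C$ and an $R$-bimodule isomorphism $\theta\colon C_1\to A^1$ with $\mu^{1,1}\circ(\theta\otimes\theta)\circ\Delta_{1,1}=0$ on $C_2$ (for a pair whose first entry is a ring over $R^{\mathrm{op}}$ and second a coring over $R^{\mathrm{op}}$, the same definition over $R^{\mathrm{op}}$). Left (right) locally finite: every homogeneous component finitely generated as a left (right) $R$-module. ${}^*V=\operatorname{Hom}_R({}_RV,{}_RR)$ is an $R^{\mathrm{op}}$-bimodule via $(r\cdot\alpha)(v)=\alpha(v)r$, $(\alpha\cdot r)(v)=\alpha(vr)$. ${}^{*\text{-gr}}A=\bigoplus{}^*(A^n)$ is a connected graded $R^{\mathrm{op}}$-coring with $\Delta_{n,m}(\alpha)=\sum_i\alpha_i'\otimes_{R^{\mathrm{op}}}\alpha_i''$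 characterized by $\alpha(a'a'')=\sum_i\alpha_i'(a'\alpha_i''(a''))$ for $a'\in A^n$, $a''\in A^m$, and counit from ${}^*R\cong R^{\mathrm{op}}$; ${}^{*\text{-gr}}C=\bigoplus{}^*(C_n)$ is a connected graded $R^{\mathrm{op}}$-ring with $(\alpha*\beta)(c)=\sum\alpha(c_{1,n}\beta(c_{2,m}))$ and unit the counit of $C$. Right graded duals $A^{*\text{-gr}}$, $C^{*\text{-gr}}$ are defined symmetrically using right $R$-linear maps. *)

(* MathComp (algebra). Noncommutative ring R : pzRingType, R^op = R^c. *)
From mathcomp Require Import all_boot all_algebra.
From Stdlib Require Import ProofIrrelevance FunctionalExtensionality.
Set Implicit Arguments.
Unset Strict Implicit.
Unset Printing Implicit Defensive.
Import GRing.Theory.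
Local Open Scope ring_scope.

Record bimod_laws (R : pzRingType) (V : Type) (z : V) (add : V -> V -> V)
  (opp : V -> V) (lact : R -> V -> V) (ract : V -> R -> V) : Prop := BimodLaws {
  addA : forall u v w, add u (add v w) = add (add u v) w;
  addC : forall u v, add u v = add v u;
  add0 : forall v, add z v = v;
  addN : forall v, add (opp v) v = z;
  lactDv : forall r u v, lact r (add u v) = add (lact r u) (lact r v);
  lactDr : forall r s v, lact (r + s) v = add (lact r v) (lact s v);
  lactM : forall r s v, lact (r * s) v = lact r (lact s v);
  lact1 : forall v, lact 1 v = v;
  ractDv : forall r u v, ract (add u v) r = add (ract u r) (ract v r);
  ractDr : forall r s v, ract v (r + s) = add (ract v r) (ract v s);
  ractM : forall r s v, ract v (r * s) = ract (ract v r) s;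
  ract1 : forall v, ract v 1 = v;
  lractA : forall r s v, ract (lact r v) s = lact r (ract v s)
}.

Record bimod (R : pzRingType) := Bimod {
  bcar :> Type;
  bzero : bcar;
  badd : bcar -> bcar -> bcar;
  bopp : bcar -> bcar;
  blact : R -> bcar -> bcar;
  bract : bcar -> R -> bcar;
  blaws : bimod_laws bzero badd bopp blact bract
}.
Arguments bzero {R} b.
Arguments badd {R b}.
Arguments bopp {R b}.
Arguments blact {R b}.
Arguments bract {R b}.

Definition bsum (R : pzRingType) (V : bimod R) (s : seq V) : V :=
  foldr badd (bzero V) s.

Definition gcast (F : nat -> Type) (m n : nat) (e : m = n) (x : F m) : F n :=
  eq_rect m F x n e.
Arguments gcast F [m n] e x.

Definition is_bimod_map (R : pzRingType) (V W : bimod R) (f : V -> W) : Prop :=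
  (forall u v, f (badd u v) = badd (f u) (f v)) /\
  (forall r v, f (blact r v) = blact r (f v)) /\
  (forall r v, f (bract v r) = bract (f v) r).

Definition bijective_map (X Y : Type) (f : X -> Y) : Prop :=
  (forall x y, f x = f y -> x = y) /\ (forall y, exists x, f x = y).

Lemma regular_laws (R : pzRingType) :
  bimod_laws (0 : R) +%R -%R *%R *%R.
Proof.
split=> *; rewrite ?addrA ?mulrDr ?mulrDl ?mulrA ?mul1r ?mulr1 ?add0r ?addNr //.
exact: addrC.
Qed.
Definition regular (R : pzRingType) : bimod R := Bimod (regular_laws R).

(* Tensor products over R, described through their universal property *)
(* An element of M (x)_R N is represented by a finite list of simple   *)
(* tensors; two lists represent the same element iff every R-balanced  *)
(* biadditive map into every abelian group takes the same value.       *)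

Definition balanced2 (R : pzRingType) (M N : bimod R) (G : zmodType)
  (f : M -> N -> G) : Prop :=
  (forall m m' n, f (badd m m') n = f m n + f m' n) /\
  (forall m n n', f m (badd n n') = f m n + f m n') /\
  (forall m r n, f (bract m r) n = f m (blact r n)).

Definition teq (R : pzRingType) (M N : bimod R) (s t : seq (M * N)) : Prop :=
  forall (G : zmodType) (f : M -> N -> G), balanced2 f ->
    \sum_(x <- s) f x.1 x.2 = \sum_(x <- t) f x.1 x.2.

Definition balanced3 (R : pzRingType) (M N P : bimod R) (G : zmodType)
  (f : M -> N -> P -> G) : Prop :=
  (forall m m' n p, f (badd m m') n p = f m n p + f m' n p) /\
  (forall m n n' p, f m (badd n n') p = f m n p + f m n' p) /\
  (forall m n p p', f m n (badd p p') = f m n p + f m n p') /\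
  (forall m r n p, f (bract m r) n p = f m (blact r n) p) /\
  (forall m n r p, f m (bract n r) p = f m n (blact r p)).

Definition teq3 (R : pzRingType) (M N P : bimod R) (s t : seq (M * N * P)) : Prop :=
  forall (G : zmodType) (f : M -> N -> P -> G), balanced3 f ->
    \sum_(x <- s) f x.1.1 x.1.2 x.2 = \sum_(x <- t) f x.1.1 x.1.2 x.2.

(* Connected graded R-rings: A = (+)_n A n, with components mul p q    *)
(* of the multiplication and unit eta : R -> A 0 (an isomorphism).     *)

Definition is_cgring (R : pzRingType) (A : nat -> bimod R)
  (mul : forall p q, A p -> A q -> A (p + q)%N) (eta : R -> A 0%N) : Prop :=
  (* each mu^{p,q} is an R-bimodule map out of A^p (x)_R A^q *)
  (forall p q a a' b, mul p q (badd a a') b = badd (mul p q a b) (mul p q a' b)) /\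
  (forall p q a b b', mul p q a (badd b b') = badd (mul p q a b) (mul p q a b')) /\
  (forall p q r a b, mul p q (bract a r) b = mul p q a (blact r b)) /\
  (forall p q r a b, mul p q (blact r a) b = blact r (mul p q a b)) /\
  (forall p q r a b, mul p q a (bract b r) = bract (mul p q a b) r) /\
  (forall p q r (a : A p) (b : A q) (c : A r),
     mul (p + q)%N r (mul p q a b) c
     = gcast (fun k => A k : Type) (addnA p q r) (mul p (q + r)%N a (mul q r b c))) /\
  is_bimod_map (V := regular R) eta /\ bijective_map eta /\
  (forall q (b : A q), mul 0%N q (eta 1) b = b) /\
  (forall p (a : A p), mul p 0%N a (eta 1) = gcast (fun k => A k : Type) (esym (addn0 p)) a).

(* Connected graded R-corings: components delta p q of the             *)
(* comultiplication (values in C p (x)_R C q, given by representatives)*)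
(* and counit eps : C 0 -> R (an isomorphism).                          *)

Definition is_cgcoring (R : pzRingType) (C : nat -> bimod R)
  (delta : forall p q, C (p + q)%N -> seq (C p * C q)) (eps : C 0%N -> R) : Prop :=
  (* each Delta_{p,q} is a bimodule map into C_p (x)_R C_q *)
  (forall p q c c', teq (delta p q (badd c c')) (delta p q c ++ delta p q c')) /\
  (forall p q r c, teq (delta p q (blact r c))
                       [seq (blact r x.1, x.2) | x <- delta p q c]) /\
  (forall p q r c, teq (delta p q (bract c r))
                       [seq (x.1, bract x.2 r) | x <- delta p q c]) /\
  (forall p q r (c : C (p + q + r)%N),
     teq3 [seq ((u.1, u.2), x.2) | x <- delta (p + q)%N r c, u <- delta p q x.1]
          [seq ((x.1, u.1), u.2) | x <- delta p (q + r)%N (gcast (fun k => C k : Type) (esym (addnA p q r)) c),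
                                   u <- delta q r x.2]) /\
  is_bimod_map (W := regular R) eps /\ bijective_map eps /\
  (forall q (c : C q), bsum [seq blact (eps x.1) x.2 | x <- delta 0%N q c] = c) /\
  (forall p (c : C (p + 0)%N),
     bsum [seq bract x.1 (eps x.2) | x <- delta p 0%N c] = gcast (fun k => C k : Type) (addn0 p) c).

Definition almost_koszul (R : pzRingType)
  (A : nat -> bimod R) (mul : forall p q, A p -> A q -> A (p + q)%N) (eta : R -> A 0%N)
  (C : nat -> bimod R) (delta : forall p q, C (p + q)%N -> seq (C p * C q))
  (eps : C 0%N -> R) (theta : C 1%N -> A 1%N) : Prop :=
  is_cgring mul eta /\ is_cgcoring delta eps /\
  is_bimod_map theta /\ bijective_map theta /\
  (forall c : C 2%N,
     bsum [seq mul 1%N 1%N (theta x.1) (theta x.2) | x <- delta 1%N 1%N c] = bzero (A 2%N)).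

Definition left_fg (R : pzRingType) (V : bimod R) : Prop :=
  exists s : seq V, forall v : V, exists rs : seq R,
    size rs = size s /\ v = bsum [seq blact x.1 x.2 | x <- zip rs s].

Definition right_fg (R : pzRingType) (V : bimod R) : Prop :=
  exists s : seq V, forall v : V, exists rs : seq R,
    size rs = size s /\ v = bsum [seq bract x.2 x.1 | x <- zip rs s].

Definition left_locally_finite (R : pzRingType) (A : nat -> bimod R) : Prop :=
  forall n, left_fg (A n).
Definition right_locally_finite (R : pzRingType) (A : nat -> bimod R) : Prop :=
  forall n, right_fg (A n).

Definition left_ideal (R : pzRingType) (I : R -> Prop) : Prop :=
  I 0 /\ (forall x y, I x -> I y -> I (x + y)) /\ (forall r x, I x -> I (r * x)).

Definition semisimple_ring (R : pzRingType) : Prop :=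
  forall I : R -> Prop, left_ideal I ->
    exists J : R -> Prop, left_ideal J /\
      (forall x, I x -> J x -> x = 0) /\
      (forall x, exists a b, I a /\ J b /\ x = a + b).

Section LeftDual.
Variables (R : pzRingType) (V : bimod R).

Definition left_lin (f : V -> R) : Prop :=
  (forall u v, f (badd u v) = f u + f v) /\ (forall r v, f (blact r v) = r * f v).

Definition ldcar := {f : V -> R | left_lin f}.

Lemma ldual_eq (f g : ldcar) : (forall v, proj1_sig f v = proj1_sig g v) -> f = g.
Proof.
case: f g => [f Hf] [g Hg] /= E.
have efg : f = g by apply: functional_extensionality.
subst g; by rewrite (proof_irrelevance _ Hf Hg).
Qed.

Let L := blaws V.

Lemma ld0_lin : left_lin (fun _ => 0).
Proof. by split=> *; rewrite ?addr0 ?mulr0. Qed.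
Definition ld0 : ldcar := exist _ _ ld0_lin.

Lemma ldadd_lin (f g : ldcar) :
  left_lin (fun v => proj1_sig f v + proj1_sig g v).
Proof.
case: f g => [f [f1 f2]] [g [g1 g2]] /=; split=> *.
  by rewrite f1 g1 addrACA.
by rewrite f2 g2 mulrDr.
Qed.
Definition ldadd (f g : ldcar) : ldcar := exist _ _ (ldadd_lin f g).

Lemma ldopp_lin (f : ldcar) : left_lin (fun v => - proj1_sig f v).
Proof.
case: f => [f [f1 f2]] /=; split=> *; first by rewrite f1 opprD.
by rewrite f2 mulrN.
Qed.
Definition ldopp (f : ldcar) : ldcar := exist _ _ (ldopp_lin f).

Lemma ldl_lin (r : R^c) (f : ldcar) : left_lin (fun v => proj1_sig f v * (r : R)).
Proof.
case: f => [f [f1 f2]] /=; split=> *; first by rewrite f1 mulrDl.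
by rewrite f2 mulrA.
Qed.
Definition ldlact (r : R^c) (f : ldcar) : ldcar := exist _ _ (ldl_lin r f).

Lemma ldr_lin (f : ldcar) (r : R^c) : left_lin (fun v => proj1_sig f (bract v (r : R))).
Proof.
case: f => [f [f1 f2]] /=; split=> *; first by rewrite (ractDv L) f1.
by rewrite (lractA L) f2.
Qed.
Definition ldract (f : ldcar) (r : R^c) : ldcar := exist _ _ (ldr_lin f r).

Lemma ldual_laws : bimod_laws ld0 ldadd ldopp ldlact ldract.
Proof.
split.
- by move=> ? ? ?; apply: ldual_eq => v /=; rewrite addrA.
- by move=> ? ?; apply: ldual_eq => v /=; rewrite addrC.
- by move=> ?; apply: ldual_eq => v /=; rewrite add0r.
- by move=> ?; apply: ldual_eq => v /=; rewrite addNr.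
- by move=> ? ? ?; apply: ldual_eq => v /=; rewrite mulrDl.
- by move=> ? ? ?; apply: ldual_eq => v /=; rewrite mulrDr.
- by move=> ? ? ?; apply: ldual_eq => v /=; rewrite -[RHS]mulrA.
- by move=> ?; apply: ldual_eq => v /=; rewrite mulr1.
- by move=> ? ? ?; apply: ldual_eq.
- move=> r s [f [f1 f2]]; apply: ldual_eq => v /=.
  by rewrite -f1 -(ractDr L).
- move=> r s [f [f1 f2]]; apply: ldual_eq => v /=.
  by rewrite -(ractM L).
- by move=> [f [f1 f2]]; apply: ldual_eq => v /=; rewrite (ract1 L).
- by move=> ? ? ?; apply: ldual_eq.
Qed.

Definition ldual : bimod R^c := Bimod ldual_laws.
End LeftDual.

Section RightDual.
Variables (R : pzRingType) (V : bimod R).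

Definition right_lin (f : V -> R) : Prop :=
  (forall u v, f (badd u v) = f u + f v) /\ (forall r v, f (bract v r) = f v * r).

Definition rdcar := {f : V -> R | right_lin f}.

Lemma rdual_eq (f g : rdcar) : (forall v, proj1_sig f v = proj1_sig g v) -> f = g.
Proof.
case: f g => [f Hf] [g Hg] /= E.
have efg : f = g by apply: functional_extensionality.
subst g; by rewrite (proof_irrelevance _ Hf Hg).
Qed.

Let L := blaws V.

Lemma rd0_lin : right_lin (fun _ => 0).
Proof. by split=> *; rewrite ?addr0 ?mul0r. Qed.
Definition rd0 : rdcar := exist _ _ rd0_lin.

Lemma rdadd_lin (f g : rdcar) :
  right_lin (fun v => proj1_sig f v + proj1_sig g v).
Proof.
case: f g => [f [f1 f2]] [g [g1 g2]] /=; split=> *.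
  by rewrite f1 g1 addrACA.
by rewrite f2 g2 mulrDl.
Qed.
Definition rdadd (f g : rdcar) : rdcar := exist _ _ (rdadd_lin f g).

Lemma rdopp_lin (f : rdcar) : right_lin (fun v => - proj1_sig f v).
Proof.
case: f => [f [f1 f2]] /=; split=> *; first by rewrite f1 opprD.
by rewrite f2 mulNr.
Qed.
Definition rdopp (f : rdcar) : rdcar := exist _ _ (rdopp_lin f).

Lemma rdl_lin (r : R^c) (f : rdcar) : right_lin (fun v => proj1_sig f (blact (r : R) v)).
Proof.
case: f => [f [f1 f2]] /=; split=> *; first by rewrite (lactDv L) f1.
by rewrite -(lractA L) f2.
Qed.
Definition rdlact (r : R^c) (f : rdcar) : rdcar := exist _ _ (rdl_lin r f).

Lemma rdr_lin (f : rdcar) (r : R^c) : right_lin (fun v => (r : R) * proj1_sig f v).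
Proof.
case: f => [f [f1 f2]] /=; split=> *; first by rewrite f1 mulrDr.
by rewrite f2 mulrA.
Qed.
Definition rdract (f : rdcar) (r : R^c) : rdcar := exist _ _ (rdr_lin f r).

Lemma rdual_laws : bimod_laws rd0 rdadd rdopp rdlact rdract.
Proof.
split.
- by move=> ? ? ?; apply: rdual_eq => v /=; rewrite addrA.
- by move=> ? ?; apply: rdual_eq => v /=; rewrite addrC.
- by move=> ?; apply: rdual_eq => v /=; rewrite add0r.
- by move=> ?; apply: rdual_eq => v /=; rewrite addNr.
- by move=> ? ? ?; apply: rdual_eq.
- move=> r s [f [f1 f2]]; apply: rdual_eq => v /=.
  by rewrite -f1 -(lactDr L).
- move=> r s [f [f1 f2]]; apply: rdual_eq => v /=.
  by rewrite -(lactM L).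
- by move=> [f [f1 f2]]; apply: rdual_eq => v /=; rewrite (lact1 L).
- by move=> ? ? ?; apply: rdual_eq => v /=; rewrite mulrDr.
- by move=> ? ? ?; apply: rdual_eq => v /=; rewrite mulrDl.
- by move=> ? ? ?; apply: rdual_eq => v /=; rewrite [RHS]mulrA.
- by move=> ?; apply: rdual_eq => v /=; rewrite mul1r.
- by move=> ? ? ?; apply: rdual_eq.
Qed.

Definition rdual : bimod R^c := Bimod rdual_laws.
End RightDual.

Definition ldev (R : pzRingType) (V : bimod R) (f : ldual V) : V -> R := proj1_sig f.
Definition rdev (R : pzRingType) (V : bimod R) (f : rdual V) : V -> R := proj1_sig f.

From Pilot Require Import Defs.
From mathcomp Require Import all_boot all_algebra.
From Stdlib Require Import Classical ClassicalEpsilon.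

(* Over a semisimple ring every finitely generated one-sided module is
   projective, so each [A^n] has a finite dual basis.  The product of [*C] is
   the transpose of the comultiplication of [C] and needs no finiteness; the
   coproduct of [*A] is the transpose of the product of [A], which lands in
   [*A^p (x) *A^q] thanks to the dual basis of [A^q].  Every axiom of the dual
   pair, including [mu (theta (x) theta) Delta = 0], is checked by pairing with
   elements of [C] or [A], where it becomes the corresponding axiom of [(A, C)].
   Right modules need right semisimplicity, which follows from the left one
   because ascending chains of principal left ideals are stationary. *)

Set Implicit Arguments.
Unset Strict Implicit.
Unset Printing Implicit Defensive.
Import GRing.Theory.
Local Open Scope ring_scope.

Section BimoduleTheory.
Variables (R : pzRingType) (V : bimod R).
Let L := blaws V.
Implicit Types (u v w : V) (r : R).

Lemma baddr0 v : badd v (bzero V) = v.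
Proof. by rewrite (Defs.addC L) (Defs.add0 L). Qed.

Lemma baddIr w u v : badd u w = badd v w -> u = v.
Proof.
move=> /(congr1 (badd^~ (bopp w))); rewrite -!(Defs.addA L).
by rewrite [badd w _](Defs.addC L) (Defs.addN L) !baddr0.
Qed.

Lemma baddACA u v w (x : V) : badd (badd u v) (badd w x) = badd (badd u w) (badd v x).
Proof.
by rewrite -!(Defs.addA L); congr badd; rewrite !(Defs.addA L) [badd v w](Defs.addC L).
Qed.

Lemma bidem0 v : badd v v = v -> v = bzero V.
Proof. by move=> E; apply: (@baddIr v); rewrite E (Defs.add0 L). Qed.

Lemma blact0r v : blact 0 v = bzero V.
Proof. by apply: bidem0; rewrite -(Defs.lactDr L) addr0. Qed.

Lemma blactr0 r : blact r (bzero V) = bzero V.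
Proof. by apply: bidem0; rewrite -(Defs.lactDv L) (Defs.add0 L). Qed.

Lemma bractr0 v : bract v 0 = bzero V.
Proof. by apply: bidem0; rewrite -(Defs.ractDr L) addr0. Qed.

Lemma bract0r r : bract (bzero V) r = bzero V.
Proof. by apply: bidem0; rewrite -(Defs.ractDv L) (Defs.add0 L). Qed.

Lemma blactB_eq r r' (m n n' : V) : badd (blact r m) n = badd (blact r' m) n' ->
  blact (r - r') m = badd n' (blact (-1) n).
Proof.
move=> E; apply: (@baddIr (badd (blact r' m) n)).
rewrite (Defs.addA L) -(Defs.lactDr L) subrK E baddACA -{2}[n](Defs.lact1 L) -(Defs.lactDr L).
by rewrite addNr blact0r baddr0 (Defs.addC L).
Qed.

Lemma bractB_eq r r' (m n n' : V) : badd (bract m r) n = badd (bract m r') n' ->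
  bract m (r - r') = badd n' (bract n (-1)).
Proof.
move=> E; apply: (@baddIr (badd (bract m r') n)).
rewrite (Defs.addA L) -(Defs.ractDr L) subrK E baddACA -{2}[n](Defs.ract1 L) -(Defs.ractDr L).
by rewrite addNr bractr0 baddr0 (Defs.addC L).
Qed.

End BimoduleTheory.

Section AdditiveMaps.
Variables (R : pzRingType) (V : bimod R) (G : zmodType) (f : V -> G).
Hypothesis fD : forall u v, f (badd u v) = f u + f v.

Lemma additive_bzero : f (bzero V) = 0.
Proof.
apply: (@addrI _ (f (bzero V))).
by rewrite addr0 -fD (Defs.add0 (blaws V)).
Qed.

Lemma additive_bsum (I : Type) (s : seq I) (g : I -> V) :
  f (bsum [seq g i | i <- s]) = \sum_(i <- s) f (g i).
Proof.
elim: s => [|i s IH] /=; first by rewrite big_nil additive_bzero.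
by rewrite big_cons fD IH.
Qed.

End AdditiveMaps.

Lemma additive_bigsum (R : pzRingType) (G : zmodType) (g : R -> G) (I : Type)
  (s : seq I) (F : I -> R) : (forall x y, g (x + y) = g x + g y) ->
  g (\sum_(i <- s) F i) = \sum_(i <- s) g (F i).
Proof.
move=> gD; apply: big_morph => //.
by apply: (@addrI _ (g 0)); rewrite -gD !addr0.
Qed.

Lemma gcast_irrelevance (F : nat -> Type) m n (e1 e2 : m = n) x :
  gcast F e1 x = gcast F e2 x.
Proof. by rewrite (eq_irrelevance e1 e2). Qed.

Lemma surj_section (X Y : Type) (f : X -> Y) :
  (forall y, exists x, f x = y) -> {g : Y -> X | cancel g f}.
Proof.
move=> f_surj; exists (fun y => sval (constructive_indefinite_description _ (f_surj y))).
by move=> y; case: constructive_indefinite_description.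
Qed.

(** * Semisimple rings *)

Definition right_ideal (R : pzRingType) (I : R -> Prop) : Prop :=
  I 0 /\ (forall x y, I x -> I y -> I (x + y)) /\ (forall x r, I x -> I (x * r)).

Section SemisimpleRing.
Variables (R : pzRingType) (HR : semisimple_ring R).

(* The [I]-component of [1] in a decomposition [R = I (+) J] generates [I]. *)
Lemma semisimple_left_ideal_gen (I : R -> Prop) : left_ideal I ->
  exists2 e, I e & forall x, I x -> x = x * e.
Proof.
move=> HI; have [J [[_ [_ JM]] [IJ0 HIJ]]] := HR HI.
have [e [f [Ie [Jf E1]]]] := HIJ 1; exists e => // x Ix.
have xf0 : x * f = 0.
  apply: IJ0; last exact: JM.
  have -> : x * f = x + (- x) * e.
    by rewrite -[f](addKr e) -E1 mulrDr mulr1 mulrN mulNr addrC.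
  by case: HI => _ [ID IM]; apply: (ID) => //; apply: (IM).
by rewrite -{1}[x]mulr1 E1 mulrDr xf0 addr0.
Qed.

Lemma semisimple_regular (a : R) :
  exists2 h, h * h = h & a = h * a /\ exists z, h = a * z.
Proof.
have HI : left_ideal (fun x : R => exists y, x = y * a).
  split; first by exists 0; rewrite mul0r.
  split; first by move=> x y [x' ->] [y' ->]; exists (x' + y'); rewrite mulrDl.
  by move=> r x [x' ->]; exists (r * x'); rewrite mulrA.
have [_ [b ->] Hb] := semisimple_left_ideal_gen HI.
have aba : a = a * b * a by rewrite -mulrA; apply: Hb; exists 1; rewrite mul1r.
by exists (a * b); [rewrite mulrA -aba | split; last exists b].
Qed.

Lemma semisimple_chain_stationary (g : nat -> R) :
  (forall n, g n = g n * g n.+1) ->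
  exists N, forall n x, x = x * g n -> x = x * g N.
Proof.
move=> gS.
have up x n m : x = x * g n -> (n <= m)%N -> x = x * g m.
  move=> xn /subnKC <-; elim: (m - n)%N => [|k IH]; first by rewrite addn0.
  by rewrite addnS {1}IH [g (n + k)%N]gS mulrA -IH.
have HU : left_ideal (fun x => exists n, x = x * g n).
  split; first by exists 0%N; rewrite mul0r.
  split; last by move=> r x [n xn]; exists n; rewrite -mulrA -xn.
  move=> x y [n xn] [m ym]; exists (maxn n m).
  by rewrite mulrDl -(up _ _ _ xn (leq_maxl n m)) -(up _ _ _ ym (leq_maxr n m)).
have [e [N eN] He] := semisimple_left_ideal_gen HU.
exists N => n x xn; have xe := He x (ex_intro _ n xn).
by rewrite {1}xe {1}eN mulrA -xe.
Qed.

(* [g' = g + h - h g], for an idempotent [h] generating the right ideal [(a - g a) R]. *)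
Lemma right_ideal_idem_step (I : R -> Prop) g a : right_ideal I ->
  g * g = g -> I g -> I a -> a <> g * a ->
  exists g', [/\ g' * g' = g', I g', g = g * g' & exists2 h, h = h * g' & h <> h * g].
Proof.
move=> [_ [ID IM]] gg Ig Ia nea.
have IN x : I x -> I (- x) by move=> Ix; rewrite -mulrN1; apply: (IM).
pose a' := a - g * a.
have ga' : g * a' = 0 by rewrite /a' mulrBr mulrA gg subrr.
have [h hh [ha [z hz]]] := semisimple_regular a'.
have gh : g * h = 0 by rewrite hz mulrA ga' mul0r.
have Ih : I h by rewrite hz; apply: (IM); apply: (ID) => //; apply: (IN); apply: (IM).
have h0 : h <> 0.
  by move=> h0; apply: nea; apply/eqP; rewrite -subr_eq0 -/a' ha h0 mul0r.
have hgh : h * g * h = 0 by rewrite -mulrA gh mulr0.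
exists (g + h - h * g); split.
- have ghg : g * (h * g) = 0 by rewrite mulrA gh mul0r.
  have hhg : h * (h * g) = h * g by rewrite mulrA hh.
  have hgg : h * g * g = h * g by rewrite -mulrA gg.
  have hghg : h * g * (h * g) = 0 by rewrite mulrA hgh mul0r.
  rewrite !(mulrDl, mulrDr, mulrN, mulNr) gg gh hh ghg hhg hgg hgh hghg.
  by rewrite !oppr0 !addr0 [h * g + h]addrC addrK.
- by apply: (ID); [apply: (ID) | apply: (IN); apply: (IM)].
- by rewrite !mulrDr mulrN mulrA gh mul0r gg oppr0 !addr0.
exists h; first by rewrite !mulrDr mulrN mulrA hh [h * g + h]addrC addrK.
by move=> E; apply: h0; rewrite -hh {1}E -mulrA gh mulr0.
Qed.

Lemma semisimple_right_ideal_gen (I : R -> Prop) : right_ideal I ->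
  exists2 g, I g & forall a, I a -> a = g * a.
Proof.
(* Otherwise [right_ideal_idem_step] produces idempotents [g_n] in [I] along
   which the left ideals [R g_n] strictly increase forever. *)
move=> HI; apply: NNPP => noGen.
pose Q g g' := [/\ g' * g' = g', I g', g = g * g' & exists2 h, h = h * g' & h <> h * g].
have step g : g * g = g -> I g -> exists g', Q g g'.
  move=> gg Ig; have [a Ia nea] : exists2 a, I a & a <> g * a.
    apply: NNPP => H; apply: noGen; exists g => // a Ia.
    by apply: NNPP => nea; apply: H; exists a.
  exact: (right_ideal_idem_step HI gg Ig Ia nea).
pose next g := epsilon (inhabits 0) (Q g).
have nextQ g : g * g = g -> I g -> Q g (next g).
  by move=> gg Ig; apply: epsilon_spec; exact: step.
pose gs n := iter n next 0.
have gsQ n : [/\ gs n * gs n = gs n, I (gs n) & Q (gs n) (gs n.+1)].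
  have I0 : I 0 := proj1 HI; have g00 : 0 * 0 = 0 :> R := mul0r 0.
  by elim: n => [|n [_ _ [gg Ig _ _]]]; split=> //; apply: nextQ.
have [N stat] : exists N, forall n x, x = x * gs n -> x = x * gs N.
  by apply: semisimple_chain_stationary => n; case: (gsQ n) => _ _ [].
by case: (gsQ N) => _ _ [_ _ _ [h /stat]].
Qed.

End SemisimpleRing.

(** * Dual bases of finitely generated modules *)

Definition is_ldual_basis (R : pzRingType) (V : bimod R) (bs : seq (V * ldual V)) :=
  forall v, v = bsum [seq blact (ldev x.2 v) x.1 | x <- bs].

Definition is_rdual_basis (R : pzRingType) (V : bimod R) (bs : seq (V * rdual V)) :=
  forall v, v = bsum [seq bract x.1 (rdev x.2 v) | x <- bs].

Section LeftDualBasis.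
Variables (R : pzRingType) (HR : semisimple_ring R) (V : bimod R).
Let L := blaws V.

Fixpoint lspan (s : seq V) (v : V) : Prop :=
  if s is m :: s' then exists r n, lspan s' n /\ v = badd (blact r m) n
  else v = bzero V.

Lemma lspan0 s : lspan s (bzero V).
Proof.
elim: s => //= m s IH; exists 0, (bzero V).
by rewrite blact0r (Defs.add0 L).
Qed.

Lemma lspanD s u v : lspan s u -> lspan s v -> lspan s (badd u v).
Proof.
elim: s u v => [|m s IH] u v /=; first by move=> -> ->; rewrite (Defs.add0 L).
move=> [r [n [Hn ->]]] [r' [n' [Hn' ->]]]; exists (r + r'), (badd n n').
by rewrite baddACA (Defs.lactDr L); split; first exact: IH.
Qed.

Lemma lspanZ s r v : lspan s v -> lspan s (blact r v).
Proof.
elim: s v => [|m s IH] v /=; first by move=> ->; rewrite blactr0.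
move=> [r' [n [Hn ->]]]; exists (r * r'), (blact r n).
by rewrite (Defs.lactDv L) (Defs.lactM L); split; first exact: IH.
Qed.

Lemma lspan_comb (s : seq V) (rs : seq R) : size rs = size s ->
  lspan s (bsum [seq blact x.1 x.2 | x <- zip rs s]).
Proof.
elim: s rs => [|m s IH] [|r rs] //= [/IH Hs].
by exists r, (bsum [seq blact x.1 x.2 | x <- zip rs s]).
Qed.

Definition llinear_on (S : V -> Prop) (f : V -> R) : Prop :=
  (forall u v, S u -> S v -> f (badd u v) = f u + f v) /\
  (forall r v, S v -> f (blact r v) = r * f v).

Section SplitGenerator.
Variables (m : V) (s : seq V).

Let S := lspan (m :: s).

(* The coefficient of [m] in [v] is determined modulo the left ideal of those
   [r] with [blact r m] in the span of [s]; multiplying it on the right by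
   [1 - e], for a generator [e] of that ideal, makes it well defined. *)
Lemma lspan_cons_split : exists (f : V -> R) (rho : V -> V),
  [/\ llinear_on S f,
      forall v, S v -> lspan s (rho v),
      forall u v, S u -> S v -> rho (badd u v) = badd (rho u) (rho v),
      forall r v, S v -> rho (blact r v) = blact r (rho v)
    & forall v, S v -> v = badd (rho v) (blact (f v) m)].
Proof.
pose I r := lspan s (blact r m).
have HI : left_ideal I.
  split; first by rewrite /I blact0r; exact: lspan0.
  split; first by move=> x y Ix Iy; rewrite /I (Defs.lactDr L); exact: lspanD.
  by move=> r x Ix; rewrite /I (Defs.lactM L); exact: lspanZ.
have [e Ie He] := semisimple_left_ideal_gen HR HI.
have coef_uniq r n r' n' : lspan s n -> lspan s n' ->
    badd (blact r m) n = badd (blact r' m) n' -> r * (1 - e) = r' * (1 - e).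
  move=> Hn Hn' /blactB_eq E; have /He : I (r - r').
    by rewrite /I E; apply: lspanD => //; apply: lspanZ.
  by move=> H; apply/eqP; rewrite -subr_eq0 -mulrBl mulrBr mulr1 -H subrr.
pose P v (rn : R * V) := lspan s rn.2 /\ v = badd (blact rn.1 m) rn.2.
pose c v := epsilon (inhabits (0, bzero V)) (P v).
have cP v : S v -> P v (c v).
  by move=> [r [n [Hn E]]]; apply: epsilon_spec; exists (r, n).
pose f v := (c v).1 * (1 - e).
pose rho v := badd (blact ((c v).1 * e) m) (c v).2.
have rho_span v : S v -> lspan s (rho v).
  by move=> /cP[Hn _]; apply: lspanD => //; case: HI => _ [_]; apply.
have dec v : S v -> v = badd (rho v) (blact (f v) m).
  move=> /cP[_ E]; rewrite {1}E /rho /f -(Defs.addA L) [badd (c v).2 _](Defs.addC L).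
  by rewrite (Defs.addA L) -(Defs.lactDr L) -mulrDr addrC subrK mulr1.
have fD u v : S u -> S v -> f (badd u v) = f u + f v.
  move=> Hu Hv; have [Hw Ew] := cP _ (lspanD Hu Hv).
  have [Hu' Eu] := cP _ Hu; have [Hv' Ev] := cP _ Hv.
  rewrite /f -mulrDl; apply: (coef_uniq _ _ _ _ Hw (lspanD Hu' Hv')).
  by rewrite -Ew {1}Eu {1}Ev baddACA (Defs.lactDr L).
have fZ r v : S v -> f (blact r v) = r * f v.
  move=> Hv; have [Hw Ew] := cP _ (lspanZ r Hv); have [Hv' Ev] := cP _ Hv.
  rewrite /f mulrA; apply: (coef_uniq _ _ _ _ Hw (lspanZ r Hv')).
  by rewrite -Ew {1}Ev (Defs.lactDv L) (Defs.lactM L).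
exists f, rho; split=> //.
- move=> u v Hu Hv; apply: (@baddIr _ _ (blact (f (badd u v)) m)).
  rewrite -dec; last exact: lspanD.
  by rewrite fD // (Defs.lactDr L) baddACA -!dec.
- move=> r v Hv; apply: (@baddIr _ _ (blact (f (blact r v)) m)).
  rewrite -dec; last exact: lspanZ.
  by rewrite fZ // (Defs.lactM L) -(Defs.lactDv L) -dec.
Qed.

End SplitGenerator.

Lemma lspan_basis (s : seq V) :
  exists bs : seq {x : V * (V -> R) | llinear_on (lspan s) x.2},
    forall v, lspan s v -> v = bsum [seq blact ((sval x).2 v) (sval x).1 | x <- bs].
Proof.
elim: s => [|m s [bs Hbs]]; first by exists [::] => v /= ->.
have [f [rho [Hf rho_span rhoD rhoZ dec]]] := lspan_cons_split m s.
have comp (g : V -> R) : llinear_on (lspan s) g -> llinear_on (lspan (m :: s)) (g \o rho).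
  case=> gD gZ; split=> [u v Hu Hv | r v Hv] /=.
    by rewrite rhoD // gD //; apply: rho_span.
  by rewrite rhoZ // gZ //; apply: rho_span.
exists (exist _ (m, f) Hf ::
        [seq exist _ ((sval x).1, (sval x).2 \o rho) (comp _ (svalP x)) | x <- bs]).
move=> v Hv /=; rewrite -map_comp (Defs.addC L) {1}(dec v Hv).
by congr badd; rewrite (Hbs _ (rho_span _ Hv)).
Qed.

Lemma ldual_basis_of_fg : left_fg V -> exists bs : seq (V * ldual V), is_ldual_basis bs.
Proof.
move=> [s Hs].
have all_span v : lspan s v by have [rs [E ->]] := Hs v; exact: lspan_comb.
have lin (g : V -> R) : llinear_on (lspan s) g -> left_lin g.
  by case=> gD gZ; split=> *; [apply: gD | apply: gZ].
have [bs Hbs] := lspan_basis s.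
exists [seq ((sval x).1, exist _ (sval x).2 (lin _ (svalP x)) : ldual V) | x <- bs].
by move=> v; rewrite -map_comp {1}(Hbs v (all_span v)).
Qed.

End LeftDualBasis.

Lemma ldual_basis_family (R : pzRingType) (HR : semisimple_ring R) (V : nat -> bimod R) :
  (forall n, left_fg (V n)) ->
  exists bas : forall n, seq (V n * ldual (V n)), forall n, is_ldual_basis (bas n).
Proof.
move=> fg; pose bs n := constructive_indefinite_description _ (ldual_basis_of_fg HR (fg n)).
by exists (fun n => sval (bs n)) => n; case: (bs n).
Qed.

Section RightDualBasis.
Variables (R : pzRingType) (HR : semisimple_ring R) (V : bimod R).
Let L := blaws V.

Fixpoint rspan (s : seq V) (v : V) : Prop :=
  if s is m :: s' then exists r n, rspan s' n /\ v = badd (bract m r) n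
  else v = bzero V.

Lemma rspan0 s : rspan s (bzero V).
Proof.
elim: s => //= m s IH; exists 0, (bzero V).
by rewrite bractr0 (Defs.add0 L).
Qed.

Lemma rspanD s u v : rspan s u -> rspan s v -> rspan s (badd u v).
Proof.
elim: s u v => [|m s IH] u v /=; first by move=> -> ->; rewrite (Defs.add0 L).
move=> [r [n [Hn ->]]] [r' [n' [Hn' ->]]]; exists (r + r'), (badd n n').
by rewrite baddACA (Defs.ractDr L); split; first exact: IH.
Qed.

Lemma rspanZ s r v : rspan s v -> rspan s (bract v r).
Proof.
elim: s v => [|m s IH] v /=; first by move=> ->; rewrite bract0r.
move=> [r' [n [Hn ->]]]; exists (r' * r), (bract n r).
by rewrite (Defs.ractDv L) (Defs.ractM L); split; first exact: IH.
Qed.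

Lemma rspan_comb (s : seq V) (rs : seq R) : size rs = size s ->
  rspan s (bsum [seq bract x.2 x.1 | x <- zip rs s]).
Proof.
elim: s rs => [|m s IH] [|r rs] //= [/IH Hs].
by exists r, (bsum [seq bract x.2 x.1 | x <- zip rs s]).
Qed.

Definition rlinear_on (S : V -> Prop) (f : V -> R) : Prop :=
  (forall u v, S u -> S v -> f (badd u v) = f u + f v) /\
  (forall r v, S v -> f (bract v r) = f v * r).

Section SplitGenerator.
Variables (m : V) (s : seq V).

Let S := rspan (m :: s).

Lemma rspan_cons_split : exists (f : V -> R) (rho : V -> V),
  [/\ rlinear_on S f,
      forall v, S v -> rspan s (rho v),
      forall u v, S u -> S v -> rho (badd u v) = badd (rho u) (rho v),
      forall r v, S v -> rho (bract v r) = bract (rho v) r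
    & forall v, S v -> v = badd (rho v) (bract m (f v))].
Proof.
pose I r := rspan s (bract m r).
have HI : right_ideal I.
  split; first by rewrite /I bractr0; exact: rspan0.
  split; first by move=> x y Ix Iy; rewrite /I (Defs.ractDr L); exact: rspanD.
  by move=> x r Ix; rewrite /I (Defs.ractM L); exact: rspanZ.
have [g Ig Hg] := semisimple_right_ideal_gen HR HI.
have coef_uniq r n r' n' : rspan s n -> rspan s n' ->
    badd (bract m r) n = badd (bract m r') n' -> (1 - g) * r = (1 - g) * r'.
  move=> Hn Hn' /bractB_eq E; have /Hg : I (r - r').
    by rewrite /I E; apply: rspanD => //; apply: rspanZ.
  by move=> H; apply/eqP; rewrite -subr_eq0 -mulrBr mulrBl mul1r -H subrr.
pose P v (rn : R * V) := rspan s rn.2 /\ v = badd (bract m rn.1) rn.2.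
pose c v := epsilon (inhabits (0, bzero V)) (P v).
have cP v : S v -> P v (c v).
  by move=> [r [n [Hn E]]]; apply: epsilon_spec; exists (r, n).
pose f v := (1 - g) * (c v).1.
pose rho v := badd (bract m (g * (c v).1)) (c v).2.
have rho_span v : S v -> rspan s (rho v).
  by move=> /cP[Hn _]; apply: rspanD => //; case: HI => _ [_]; apply.
have dec v : S v -> v = badd (rho v) (bract m (f v)).
  move=> /cP[_ E]; rewrite {1}E /rho /f -(Defs.addA L) [badd (c v).2 _](Defs.addC L).
  by rewrite (Defs.addA L) -(Defs.ractDr L) -mulrDl addrC subrK mul1r.
have fD u v : S u -> S v -> f (badd u v) = f u + f v.
  move=> Hu Hv; have [Hw Ew] := cP _ (rspanD Hu Hv).
  have [Hu' Eu] := cP _ Hu; have [Hv' Ev] := cP _ Hv.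
  rewrite /f -mulrDr; apply: (coef_uniq _ _ _ _ Hw (rspanD Hu' Hv')).
  by rewrite -Ew {1}Eu {1}Ev baddACA (Defs.ractDr L).
have fZ r v : S v -> f (bract v r) = f v * r.
  move=> Hv; have [Hw Ew] := cP _ (rspanZ r Hv); have [Hv' Ev] := cP _ Hv.
  rewrite /f -mulrA; apply: (coef_uniq _ _ _ _ Hw (rspanZ r Hv')).
  by rewrite -Ew {1}Ev (Defs.ractDv L) (Defs.ractM L).
exists f, rho; split=> //.
- move=> u v Hu Hv; apply: (@baddIr _ _ (bract m (f (badd u v)))).
  rewrite -dec; last exact: rspanD.
  by rewrite fD // (Defs.ractDr L) baddACA -!dec.
- move=> r v Hv; apply: (@baddIr _ _ (bract m (f (bract v r)))).
  rewrite -dec; last exact: rspanZ.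
  by rewrite fZ // (Defs.ractM L) -(Defs.ractDv L) -dec.
Qed.

End SplitGenerator.

Lemma rspan_basis (s : seq V) :
  exists bs : seq {x : V * (V -> R) | rlinear_on (rspan s) x.2},
    forall v, rspan s v -> v = bsum [seq bract (sval x).1 ((sval x).2 v) | x <- bs].
Proof.
elim: s => [|m s [bs Hbs]]; first by exists [::] => v /= ->.
have [f [rho [Hf rho_span rhoD rhoZ dec]]] := rspan_cons_split m s.
have comp (g : V -> R) : rlinear_on (rspan s) g -> rlinear_on (rspan (m :: s)) (g \o rho).
  case=> gD gZ; split=> [u v Hu Hv | r v Hv] /=.
    by rewrite rhoD // gD //; apply: rho_span.
  by rewrite rhoZ // gZ //; apply: rho_span.
exists (exist _ (m, f) Hf ::
        [seq exist _ ((sval x).1, (sval x).2 \o rho) (comp _ (svalP x)) | x <- bs]).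
move=> v Hv /=; rewrite -map_comp (Defs.addC L) {1}(dec v Hv).
by congr badd; rewrite (Hbs _ (rho_span _ Hv)).
Qed.

Lemma rdual_basis_of_fg : right_fg V -> exists bs : seq (V * rdual V), is_rdual_basis bs.
Proof.
move=> [s Hs].
have all_span v : rspan s v by have [rs [E ->]] := Hs v; exact: rspan_comb.
have lin (g : V -> R) : rlinear_on (rspan s) g -> right_lin g.
  by case=> gD gZ; split=> *; [apply: gD | apply: gZ].
have [bs Hbs] := rspan_basis s.
exists [seq ((sval x).1, exist _ (sval x).2 (lin _ (svalP x)) : rdual V) | x <- bs].
by move=> v; rewrite -map_comp {1}(Hbs v (all_span v)).
Qed.

End RightDualBasis.

Lemma rdual_basis_family (R : pzRingType) (HR : semisimple_ring R) (V : nat -> bimod R) :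
  (forall n, right_fg (V n)) ->
  exists bas : forall n, seq (V n * rdual (V n)), forall n, is_rdual_basis (bas n).
Proof.
move=> fg; pose bs n := constructive_indefinite_description _ (rdual_basis_of_fg HR (fg n)).
by exists (fun n => sval (bs n)) => n; case: (bs n).
Qed.

(** * Duals and tensor products *)

Section LeftDualTheory.
Variable R : pzRingType.
Implicit Types V : bimod R.

Lemma ldev_add V (f : ldual V) u v : ldev f (badd u v) = ldev f u + ldev f v.
Proof. by case: f => f [fD fZ]; apply: fD. Qed.

Lemma ldev_lact V (f : ldual V) r v : ldev f (blact r v) = r * ldev f v.
Proof. by case: f => f [fD fZ]; apply: fZ. Qed.

Lemma ldev0 V (f : ldual V) : ldev f (bzero V) = 0.
Proof. exact/additive_bzero/ldev_add. Qed.

Lemma ldev_bsum V (f : ldual V) (I : Type) (s : seq I) (g : I -> V) :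
  ldev f (bsum [seq g i | i <- s]) = \sum_(i <- s) ldev f (g i).
Proof. exact/additive_bsum/ldev_add. Qed.

Lemma ldual_addE V (f g : ldual V) v : ldev (badd f g) v = ldev f v + ldev g v.
Proof. by []. Qed.

Lemma ldual_lactE V (r : R^c) (f : ldual V) v : ldev (blact r f) v = ldev f v * r.
Proof. by []. Qed.

Lemma ldual_ractE V (r : R^c) (f : ldual V) v :
  ldev (bract f r) v = ldev f (bract v (r : R)).
Proof. by []. Qed.

Lemma ldual_zeroE V v : ldev (bzero (ldual V)) v = 0.
Proof. by []. Qed.

Lemma ldual_sumE V (I : Type) (s : seq I) (g : I -> ldual V) v :
  ldev (bsum [seq g i | i <- s]) v = \sum_(i <- s) ldev (g i) v.
Proof. by elim: s => [|i s IH]; rewrite ?big_nil ?big_cons //= -IH. Qed.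

Lemma ldual_ext V (f g : ldual V) : (forall v, ldev f v = ldev g v) -> f = g.
Proof. exact: ldual_eq. Qed.

Lemma ldev_gcast (F : nat -> bimod R) m n (e : m = n) (a : ldual (F m)) v :
  ldev (gcast (fun k => ldual (F k) : Type) e a) v
  = ldev a (gcast (fun k => F k : Type) (esym e) v).
Proof. by move: v; case: n / e. Qed.

Lemma ldual_expand V (bs : seq (V * ldual V)) (g : ldual V) : is_ldual_basis bs ->
  g = bsum [seq blact (ldev g x.1 : R^c) x.2 | x <- bs].
Proof.
move=> Hbs; apply: ldual_ext => v; rewrite ldual_sumE {1}(Hbs v) ldev_bsum.
by apply: eq_bigr => x _; rewrite ldev_lact.
Qed.

Lemma teq_ldual (M N : bimod R) (bN : seq (N * ldual N)) (s t : seq (ldual M * ldual N)) :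
  is_ldual_basis bN ->
  (forall m n, \sum_(x <- s) ldev x.1 (bract m (ldev x.2 n))
             = \sum_(x <- t) ldev x.1 (bract m (ldev x.2 n))) -> teq s t.
Proof.
move=> HbN H G F [FDl [FDr FB]].
have red (u : seq (ldual M * ldual N)) : \sum_(x <- u) F x.1 x.2 =
    \sum_(e <- bN) F (bsum [seq bract x.1 (ldev x.2 e.1 : R^c) | x <- u]) e.2.
  transitivity (\sum_(x <- u) \sum_(e <- bN) F (bract x.1 (ldev x.2 e.1 : R^c)) e.2).
    apply: eq_bigr => x _; rewrite {1}(ldual_expand x.2 HbN).
    rewrite (additive_bsum (f := F x.1)) //.
    by apply: eq_bigr => e _; rewrite FB.
  rewrite exchange_big; apply: eq_bigr => e _.
  by rewrite (additive_bsum (f := F^~ e.2)).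
rewrite !red; apply: eq_bigr => e _; congr F; apply: ldual_ext => m.
by rewrite !ldual_sumE; exact: H.
Qed.

Lemma teq3_ldual (M N P : bimod R) (bN : seq (N * ldual N)) (bP : seq (P * ldual P))
  (s t : seq (ldual M * ldual N * ldual P)) : is_ldual_basis bN -> is_ldual_basis bP ->
  (forall m n p, \sum_(x <- s) ldev x.1.1 (bract m (ldev x.1.2 (bract n (ldev x.2 p))))
             = \sum_(x <- t) ldev x.1.1 (bract m (ldev x.1.2 (bract n (ldev x.2 p))))) ->
  teq3 s t.
Proof.
move=> HbN HbP H G F [FD1 [FD2 [FD3 [FB1 FB2]]]].
have red (u : seq (ldual M * ldual N * ldual P)) : \sum_(x <- u) F x.1.1 x.1.2 x.2 =
    \sum_(c <- bP) \sum_(b <- bN)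
      F (bsum [seq bract x.1.1 (ldev x.1.2 (bract b.1 (ldev x.2 c.1)) : R^c) | x <- u])
        b.2 c.2.
  transitivity (\sum_(x <- u) \sum_(c <- bP) \sum_(b <- bN)
      F (bract x.1.1 (ldev x.1.2 (bract b.1 (ldev x.2 c.1)) : R^c)) b.2 c.2).
    apply: eq_bigr => x _; rewrite {1}(ldual_expand x.2 HbP).
    rewrite (additive_bsum (f := F x.1.1 x.1.2)) //.
    apply: eq_bigr => c _; rewrite -FB2 {1}(ldual_expand (bract x.1.2 _) HbN).
    rewrite (additive_bsum (f := fun n => F x.1.1 n c.2)) //.
    by apply: eq_bigr => b _; rewrite FB1.
  rewrite exchange_big; apply: eq_bigr => c _; rewrite exchange_big.
  by apply: eq_bigr => b _; rewrite (additive_bsum (f := fun m => F m b.2 c.2)).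
rewrite !red; apply: eq_bigr => c _; apply: eq_bigr => b _; congr F.
by apply: ldual_ext => m; rewrite !ldual_sumE; exact: H.
Qed.

End LeftDualTheory.

Section RightDualTheory.
Variable R : pzRingType.
Implicit Types V : bimod R.

Lemma rdev_add V (f : rdual V) u v : rdev f (badd u v) = rdev f u + rdev f v.
Proof. by case: f => f [fD fZ]; apply: fD. Qed.

Lemma rdev_ract V (f : rdual V) r v : rdev f (bract v r) = rdev f v * r.
Proof. by case: f => f [fD fZ]; apply: fZ. Qed.

Lemma rdev0 V (f : rdual V) : rdev f (bzero V) = 0.
Proof. exact/additive_bzero/rdev_add. Qed.

Lemma rdev_bsum V (f : rdual V) (I : Type) (s : seq I) (g : I -> V) :
  rdev f (bsum [seq g i | i <- s]) = \sum_(i <- s) rdev f (g i).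
Proof. exact/additive_bsum/rdev_add. Qed.

Lemma rdual_addE V (f g : rdual V) v : rdev (badd f g) v = rdev f v + rdev g v.
Proof. by []. Qed.

Lemma rdual_lactE V (r : R^c) (f : rdual V) v :
  rdev (blact r f) v = rdev f (blact (r : R) v).
Proof. by []. Qed.

Lemma rdual_ractE V (r : R^c) (f : rdual V) v : rdev (bract f r) v = (r : R) * rdev f v.
Proof. by []. Qed.

Lemma rdual_zeroE V v : rdev (bzero (rdual V)) v = 0.
Proof. by []. Qed.

Lemma rdual_sumE V (I : Type) (s : seq I) (g : I -> rdual V) v :
  rdev (bsum [seq g i | i <- s]) v = \sum_(i <- s) rdev (g i) v.
Proof. by elim: s => [|i s IH]; rewrite ?big_nil ?big_cons //= -IH. Qed.

Lemma rdual_ext V (f g : rdual V) : (forall v, rdev f v = rdev g v) -> f = g.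
Proof. exact: rdual_eq. Qed.

Lemma rdev_gcast (F : nat -> bimod R) m n (e : m = n) (a : rdual (F m)) v :
  rdev (gcast (fun k => rdual (F k) : Type) e a) v
  = rdev a (gcast (fun k => F k : Type) (esym e) v).
Proof. by move: v; case: n / e. Qed.

Lemma rdual_expand V (bs : seq (V * rdual V)) (g : rdual V) : is_rdual_basis bs ->
  g = bsum [seq bract x.2 (rdev g x.1 : R^c) | x <- bs].
Proof.
move=> Hbs; apply: rdual_ext => v; rewrite rdual_sumE {1}(Hbs v) rdev_bsum.
by apply: eq_bigr => x _; rewrite rdev_ract.
Qed.

Lemma teq_rdual (M N : bimod R) (bM : seq (M * rdual M)) (s t : seq (rdual M * rdual N)) :
  is_rdual_basis bM ->
  (forall m n, \sum_(x <- s) rdev x.2 (blact (rdev x.1 m) n)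
             = \sum_(x <- t) rdev x.2 (blact (rdev x.1 m) n)) -> teq s t.
Proof.
move=> HbM H G F [FDl [FDr FB]].
have red (u : seq (rdual M * rdual N)) : \sum_(x <- u) F x.1 x.2 =
    \sum_(e <- bM) F e.2 (bsum [seq blact (rdev x.1 e.1 : R^c) x.2 | x <- u]).
  transitivity (\sum_(x <- u) \sum_(e <- bM) F e.2 (blact (rdev x.1 e.1 : R^c) x.2)).
    apply: eq_bigr => x _; rewrite {1}(rdual_expand x.1 HbM).
    rewrite (additive_bsum (f := F^~ x.2)) //.
    by apply: eq_bigr => e _; rewrite FB.
  rewrite exchange_big; apply: eq_bigr => e _.
  by rewrite (additive_bsum (f := F e.2)).
rewrite !red; apply: eq_bigr => e _; congr F; apply: rdual_ext => n.
by rewrite !rdual_sumE; exact: H.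
Qed.

Lemma teq3_rdual (M N P : bimod R) (bM : seq (M * rdual M)) (bN : seq (N * rdual N))
  (s t : seq (rdual M * rdual N * rdual P)) : is_rdual_basis bM -> is_rdual_basis bN ->
  (forall m n p, \sum_(x <- s) rdev x.2 (blact (rdev x.1.2 (blact (rdev x.1.1 m) n)) p)
             = \sum_(x <- t) rdev x.2 (blact (rdev x.1.2 (blact (rdev x.1.1 m) n)) p)) ->
  teq3 s t.
Proof.
move=> HbM HbN H G F [FD1 [FD2 [FD3 [FB1 FB2]]]].
have red (u : seq (rdual M * rdual N * rdual P)) : \sum_(x <- u) F x.1.1 x.1.2 x.2 =
    \sum_(e <- bM) \sum_(f <- bN)
      F e.2 f.2 (bsum [seq blact (rdev x.1.2 (blact (rdev x.1.1 e.1) f.1) : R^c) x.2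
                      | x <- u]).
  transitivity (\sum_(x <- u) \sum_(e <- bM) \sum_(f <- bN)
      F e.2 f.2 (blact (rdev x.1.2 (blact (rdev x.1.1 e.1) f.1) : R^c) x.2)).
    apply: eq_bigr => x _; rewrite {1}(rdual_expand x.1.1 HbM).
    rewrite (additive_bsum (f := fun m => F m x.1.2 x.2)) //.
    apply: eq_bigr => e _; rewrite FB1 {1}(rdual_expand (blact _ x.1.2) HbN).
    rewrite (additive_bsum (f := fun n => F e.2 n x.2)) //.
    by apply: eq_bigr => f _; rewrite FB2.
  rewrite exchange_big; apply: eq_bigr => e _; rewrite exchange_big.
  by apply: eq_bigr => f _; rewrite (additive_bsum (f := F e.2 f.2)).
rewrite !red; apply: eq_bigr => e _; apply: eq_bigr => f _; congr F.
by apply: rdual_ext => p; rewrite !rdual_sumE; exact: H.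
Qed.

End RightDualTheory.

(** * Graded duals of an almost-Koszul pair *)

Section GradedDuals.
Variables (R : pzRingType) (A : nat -> bimod R)
  (mulA : forall p q, A p -> A q -> A (p + q)%N) (etaA : R -> A 0%N)
  (C : nat -> bimod R) (delC : forall p q, C (p + q)%N -> seq (C p * C q))
  (epsC : C 0%N -> R) (theta : C 1%N -> A 1%N).
Hypothesis HAC : almost_koszul mulA etaA delC epsC theta.

Let HA := proj1 HAC.
Let HC := proj1 (proj2 HAC).
Let theta_map := proj1 (proj2 (proj2 HAC)).
Let theta_bij := proj1 (proj2 (proj2 (proj2 HAC))).
Let theta_koszul := proj2 (proj2 (proj2 (proj2 HAC))).
Let mulA_addl := proj1 HA.
Let mulA_addr := proj1 (proj2 HA).
Let mulA_balanced := proj1 (proj2 (proj2 HA)).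
Let mulA_lact := proj1 (proj2 (proj2 (proj2 HA))).
Let mulA_ract := proj1 (proj2 (proj2 (proj2 (proj2 HA)))).
Let mulA_assoc := proj1 (proj2 (proj2 (proj2 (proj2 (proj2 HA))))).
Let etaA_map := proj1 (proj2 (proj2 (proj2 (proj2 (proj2 (proj2 HA)))))).
Let etaA_bij := proj1 (proj2 (proj2 (proj2 (proj2 (proj2 (proj2 (proj2 HA))))))).
Let mulA_1l := proj1 (proj2 (proj2 (proj2 (proj2 (proj2 (proj2 (proj2 (proj2 HA)))))))).
Let mulA_1r := proj2 (proj2 (proj2 (proj2 (proj2 (proj2 (proj2 (proj2 (proj2 HA)))))))).
Let delC_add := proj1 HC.
Let delC_lact := proj1 (proj2 HC).
Let delC_ract := proj1 (proj2 (proj2 HC)).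
Let delC_coassoc := proj1 (proj2 (proj2 (proj2 HC))).
Let epsC_map := proj1 (proj2 (proj2 (proj2 (proj2 HC)))).
Let epsC_bij := proj1 (proj2 (proj2 (proj2 (proj2 (proj2 HC))))).
Let delC_counitl := proj1 (proj2 (proj2 (proj2 (proj2 (proj2 (proj2 HC)))))).
Let delC_counitr := proj2 (proj2 (proj2 (proj2 (proj2 (proj2 (proj2 HC)))))).

Lemma etaA_lact_ract (s : R) : bract (etaA 1) s = blact s (etaA 1).
Proof. by case: etaA_map => _ [eL eR]; rewrite -eR -eL /= mul1r mulr1. Qed.

Section LeftGradedDual.
Variable bas : forall n, seq (A n * ldual (A n)).
Hypothesis Hbas : forall n, is_ldual_basis (bas n).

Lemma ldmul_balanced2 p q (a : ldual (C p)) (b : ldual (C q)) :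
  balanced2 (G := R) (fun u v => ldev a (bract u (ldev b v))).
Proof.
split; first by move=> m m' n; rewrite (Defs.ractDv (blaws _)) ldev_add.
split; first by move=> m n n'; rewrite ldev_add (Defs.ractDr (blaws _)) ldev_add.
by move=> m r n; rewrite -(Defs.ractM (blaws _)) ldev_lact.
Qed.

Lemma ldmul_lin p q (a : ldual (C p)) (b : ldual (C q)) :
  left_lin (fun c => \sum_(x <- @delC p q c) ldev a (bract x.1 (ldev b x.2))).
Proof.
split=> [u v | r v]; first by rewrite (delC_add u v (ldmul_balanced2 a b)) big_cat.
rewrite (delC_lact r v (ldmul_balanced2 a b)) big_map mulr_sumr.
by apply: eq_bigr => x _ /=; rewrite (Defs.lractA (blaws _)) ldev_lact.
Qed.

Definition ldmul p q (a : ldual (C p)) (b : ldual (C q)) : ldual (C (p + q)%N) :=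
  exist _ _ (ldmul_lin a b).

Lemma ldmulE p q a b c :
  ldev (@ldmul p q a b) c = \sum_(x <- @delC p q c) ldev a (bract x.1 (ldev b x.2)).
Proof. by []. Qed.

Lemma ldunit_lin (r : R^c) : left_lin (fun c : C 0%N => epsC c * (r : R)).
Proof.
case: epsC_map => eD [eL _]; split=> *; first by rewrite eD mulrDl.
by rewrite eL mulrA.
Qed.

Definition ldunit (r : R^c) : ldual (C 0%N) := exist _ _ (ldunit_lin r).

Lemma ldcomul_factor_lin p q (a : ldual (A (p + q)%N)) (e : A q) :
  left_lin (fun a1 : A p => ldev a (mulA a1 e)).
Proof. by split=> *; rewrite ?mulA_addl ?mulA_lact ?ldev_add ?ldev_lact. Qed.

(* [ldcomul a = \sum_i a (_ * e_i) (x) e_i^*] for the dual basis [(e_i, e_i^* )]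
   of [A q]; this is the only place where local finiteness (of [A] only) is used. *)
Definition ldcomul p q (a : ldual (A (p + q)%N)) : seq (ldual (A p) * ldual (A q)) :=
  [seq (exist _ _ (ldcomul_factor_lin a e.1) : ldual (A p), e.2) | e <- bas q].

Lemma ldcomulE p q a m n :
  \sum_(x <- @ldcomul p q a) ldev x.1 (bract m (ldev x.2 n)) = ldev a (mulA m n).
Proof.
rewrite big_map [in RHS](Hbas n).
rewrite (additive_bsum (f := fun v => ldev a (mulA m v))); last first.
  by move=> u v; rewrite mulA_addr ldev_add.
by apply: eq_bigr => e _ /=; rewrite mulA_balanced.
Qed.

Definition ldcounit (a : ldual (A 0%N)) : R^c := ldev a (etaA 1).

Lemma ldtheta_lin (a : ldual (A 1%N)) : left_lin (fun c => ldev a (theta c)).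
Proof. by case: theta_map => tD [tL _]; split=> *; rewrite ?tD ?tL ?ldev_add ?ldev_lact. Qed.

Definition ldtheta a : ldual (C 1%N) := exist _ _ (ldtheta_lin a).

Lemma ldmul_addl p q (a a' : ldual (C p)) (b : ldual (C q)) :
  ldmul (badd a a') b = badd (ldmul a b) (ldmul a' b).
Proof. by apply: ldual_ext => c; rewrite ldual_addE !ldmulE -big_split. Qed.

Lemma ldmul_addr p q (a : ldual (C p)) (b b' : ldual (C q)) :
  ldmul a (badd b b') = badd (ldmul a b) (ldmul a b').
Proof.
apply: ldual_ext => c; rewrite ldual_addE !ldmulE -big_split; apply: eq_bigr => x _.
by rewrite ldual_addE (Defs.ractDr (blaws _)) ldev_add.
Qed.

Lemma ldmul_balanced p q r (a : ldual (C p)) (b : ldual (C q)) :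
  ldmul (bract a r) b = ldmul a (blact r b).
Proof.
apply: ldual_ext => c; rewrite !ldmulE; apply: eq_bigr => x _.
by rewrite ldual_ractE ldual_lactE (Defs.ractM (blaws _)).
Qed.

Lemma ldmul_lact p q r (a : ldual (C p)) (b : ldual (C q)) :
  ldmul (blact r a) b = blact r (ldmul a b).
Proof. by apply: ldual_ext => c; rewrite ldual_lactE !ldmulE mulr_suml. Qed.

Lemma ldmul_ract p q r (a : ldual (C p)) (b : ldual (C q)) :
  ldmul a (bract b r) = bract (ldmul a b) r.
Proof.
apply: ldual_ext => c; rewrite ldual_ractE !ldmulE.
by rewrite (delC_ract r c (ldmul_balanced2 a b)) big_map.
Qed.

Lemma ldmul_balanced3 p q r (a : ldual (C p)) (b : ldual (C q)) (d : ldual (C r)) :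
  balanced3 (G := R) (fun m n k => ldev a (bract m (ldev b (bract n (ldev d k))))).
Proof.
have rD := Defs.ractDr (blaws _); have rDv := Defs.ractDv (blaws _).
split; first by move=> m m' n k; rewrite rDv ldev_add.
split; first by move=> m n n' k; rewrite rDv ldev_add rD ldev_add.
split; first by move=> m n k k'; rewrite ldev_add rD ldev_add rD ldev_add.
have rM := Defs.ractM (blaws _).
split; first by move=> m s n k; rewrite -rM (Defs.lractA (blaws _)) ldev_lact.
by move=> m n s k; rewrite -rM ldev_lact.
Qed.

Lemma ldmul_assoc p q r (a : ldual (C p)) (b : ldual (C q)) (d : ldual (C r)) :
  ldmul (ldmul a b) d
  = gcast (fun k => ldual (C k) : Type) (addnA p q r) (ldmul a (ldmul b d)).
Proof.
apply: ldual_ext => c; rewrite ldev_gcast !ldmulE.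
pose F3 (m : C p) (n : C q) (k : C r) := ldev a (bract m (ldev b (bract n (ldev d k)))).
transitivity (\sum_(y <- [seq ((u.1, u.2), x.2) | x <- @delC (p + q)%N r c,
                                               u <- @delC p q x.1]) F3 y.1.1 y.1.2 y.2).
  rewrite big_allpairs_dep /=; apply: eq_bigr => x _.
  by rewrite (delC_ract _ x.1 (ldmul_balanced2 a b)) big_map.
rewrite (delC_coassoc c (ldmul_balanced3 a b d)) big_allpairs_dep /=.
apply: eq_bigr => x _.
rewrite (additive_bigsum (g := fun s : R => ldev a (bract x.1 s))) //.
by move=> s s'; rewrite (Defs.ractDr (blaws _)) ldev_add.
Qed.

Lemma ldunit_map : is_bimod_map (V := regular R^c) ldunit.
Proof.
case: epsC_map => _ [_ eR].
split; first by move=> r s; apply: ldual_ext => c; rewrite ldual_addE /= mulrDr.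
split; first by move=> r s; apply: ldual_ext => c; rewrite ldual_lactE /= mulrA.
by move=> r s; apply: ldual_ext => c; rewrite ldual_ractE /= eR /= mulrA.
Qed.

Lemma ldunit_bij : bijective_map ldunit.
Proof.
case: epsC_map => _ [eL _]; case: epsC_bij => e_inj e_surj.
have [c1 c1E] := e_surj 1.
split=> [r s /(congr1 (fun f => ldev f c1)) | f]; first by rewrite /= c1E !mul1r.
exists (ldev f c1 : R^c); apply: ldual_ext => c.
have Ec : c = blact (epsC c) c1 by apply: e_inj; rewrite eL /= c1E mulr1.
by rewrite [in RHS]Ec ldev_lact.
Qed.

Lemma ldmul_unitl q (b : ldual (C q)) : ldmul (ldunit 1) b = b.
Proof.
case: epsC_map => _ [_ eR].
apply: ldual_ext => c; rewrite ldmulE -[in RHS](delC_counitl c) ldev_bsum.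
by apply: eq_bigr => x _ /=; rewrite eR /= mulr1 ldev_lact.
Qed.

Lemma ldmul_unitr p (a : ldual (C p)) :
  ldmul a (ldunit 1) = gcast (fun k => ldual (C k) : Type) (esym (addn0 p)) a.
Proof.
apply: ldual_ext => c; rewrite ldev_gcast ldmulE.
rewrite (@gcast_irrelevance (fun k => C k : Type) _ _ (esym (esym _)) (addn0 p)).
rewrite -delC_counitr ldev_bsum.
by apply: eq_bigr => x _ /=; rewrite mulr1.
Qed.

Lemma ldual_cgring : is_cgring (A := fun n => ldual (C n)) ldmul ldunit.
Proof.
split; first exact: ldmul_addl.
split; first exact: ldmul_addr.
split; first exact: ldmul_balanced.
split; first exact: ldmul_lact.
split; first exact: ldmul_ract.
split; first exact: ldmul_assoc.
split; first exact: ldunit_map.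
split; first exact: ldunit_bij.
split; first exact: ldmul_unitl.
exact: ldmul_unitr.
Qed.

Lemma ldcomul_add p q (a a' : ldual (A (p + q)%N)) :
  teq (@ldcomul p q (badd a a')) (@ldcomul p q a ++ @ldcomul p q a').
Proof. by apply: (teq_ldual (@Hbas q)) => m n; rewrite big_cat !ldcomulE. Qed.

Lemma ldcomul_lact p q r (a : ldual (A (p + q)%N)) :
  teq (@ldcomul p q (blact r a)) [seq (blact r x.1, x.2) | x <- @ldcomul p q a].
Proof.
apply: (teq_ldual (@Hbas q)) => m n; rewrite ldcomulE big_map.
rewrite [RHS](eq_bigr (fun x => ldev x.1 (bract m (ldev x.2 n)) * r)) //.
by rewrite -mulr_suml ldcomulE.
Qed.

Lemma ldcomul_ract p q r (a : ldual (A (p + q)%N)) :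
  teq (@ldcomul p q (bract a r)) [seq (x.1, bract x.2 r) | x <- @ldcomul p q a].
Proof.
apply: (teq_ldual (@Hbas q)) => m n; rewrite ldcomulE big_map.
by rewrite [RHS](ldcomulE a m (bract n (r : R))) mulA_ract.
Qed.

Lemma ldcomul_coassoc p q r (a : ldual (A (p + q + r)%N)) :
  teq3 [seq ((u.1, u.2), x.2) | x <- @ldcomul (p + q)%N r a, u <- @ldcomul p q x.1]
       [seq ((x.1, u.1), u.2) | x <- @ldcomul p (q + r)%N
              (gcast (fun k => ldual (A k) : Type) (esym (addnA p q r)) a),
                                u <- @ldcomul q r x.2].
Proof.
apply: (teq3_ldual (@Hbas q) (@Hbas r)) => m n k; rewrite !big_allpairs_dep /=.
transitivity (ldev a (mulA (mulA m n) k)).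
  by rewrite -ldcomulE; apply: eq_bigr => x _; rewrite ldcomulE mulA_ract.
transitivity (\sum_(x <- @ldcomul p (q + r)%N
              (gcast (fun k => ldual (A k) : Type) (esym (addnA p q r)) a))
                ldev x.1 (bract m (ldev x.2 (mulA n k)))).
  rewrite ldcomulE ldev_gcast mulA_assoc.
  by rewrite (@gcast_irrelevance (fun k => A k : Type) _ _ (esym (esym _)) (addnA p q r)).
apply: eq_bigr => x _; rewrite -ldcomulE.
rewrite (additive_bigsum (g := fun s : R => ldev x.1 (bract m s))) //.
by move=> s s'; rewrite (Defs.ractDr (blaws _)) ldev_add.
Qed.

Lemma ldcounit_map : is_bimod_map (W := regular R^c) ldcounit.
Proof.
split=> //; split=> // r f.
by rewrite /ldcounit ldual_ractE etaA_lact_ract ldev_lact.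
Qed.

Lemma ldcounit_bij : bijective_map ldcounit.
Proof.
case: etaA_map => eD [eL _]; case: etaA_bij => e_inj e_surj.
have [etaA_inv etaA_invK] := surj_section e_surj.
have etaAE r : etaA r = blact r (etaA 1) by rewrite -eL /= mulr1.
split=> [f g E | r].
  by apply: ldual_ext => v; rewrite -(etaA_invK v) etaAE !ldev_lact; congr (_ * _).
have lin : left_lin (fun v : A 0%N => etaA_inv v * (r : R)).
  split=> [u v | s v]; rewrite ?mulrA -?mulrDl; congr (_ * _); apply: e_inj.
    by rewrite eD /= !etaA_invK.
  by rewrite eL /= !etaA_invK.
exists (exist _ _ lin); rewrite /ldcounit /=.
have -> : etaA_inv (etaA 1) = 1 by apply: e_inj; rewrite etaA_invK.
by rewrite mul1r.
Qed.

Lemma ldcomul_counitl q (a : ldual (A (0 + q)%N)) :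
  bsum [seq blact (ldcounit x.1) x.2 | x <- @ldcomul 0%N q a] = a.
Proof.
apply: ldual_ext => v; rewrite ldual_sumE -[in RHS](mulA_1l v) -(@ldcomulE 0 q a).
by apply: eq_bigr => x _; rewrite ldual_lactE etaA_lact_ract ldev_lact.
Qed.

Lemma ldcomul_counitr p (a : ldual (A (p + 0)%N)) :
  bsum [seq bract x.1 (ldcounit x.2) | x <- @ldcomul p 0%N a]
  = gcast (fun k => ldual (A k) : Type) (addn0 p) a.
Proof. by apply: ldual_ext => v; rewrite ldual_sumE ldev_gcast -mulA_1r -ldcomulE. Qed.

Lemma ldual_cgcoring : is_cgcoring (C := fun n => ldual (A n)) ldcomul ldcounit.
Proof.
split; first exact: ldcomul_add.
split; first exact: ldcomul_lact.
split; first exact: ldcomul_ract.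
split; first exact: ldcomul_coassoc.
split; first exact: ldcounit_map.
split; first exact: ldcounit_bij.
split; first exact: ldcomul_counitl.
exact: ldcomul_counitr.
Qed.

Lemma ldtheta_map : is_bimod_map ldtheta.
Proof.
case: theta_map => _ [_ tR].
by split=> [a b | ]; [apply: ldual_ext | split=> r a; apply: ldual_ext => c //=; rewrite tR].
Qed.

Lemma ldtheta_bij : bijective_map ldtheta.
Proof.
case: theta_map => tD [tL _]; case: theta_bij => t_inj t_surj.
split=> [a b E | g].
  by apply: ldual_ext => v; have [c <-] := t_surj v; apply: (congr1 (fun f => ldev f c) E).
have [theta_inv theta_invK] := surj_section t_surj.
have lin : left_lin (fun v => ldev g (theta_inv v)).
  split=> [u v | s v]; rewrite -?ldev_add -?ldev_lact; congr ldev; apply: t_inj.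
    by rewrite tD !theta_invK.
  by rewrite tL !theta_invK.
exists (exist _ _ lin); apply: ldual_ext => c /=.
by congr ldev; apply: t_inj; rewrite theta_invK.
Qed.

Lemma ldtheta_koszul (a : ldual (A 2%N)) :
  bsum [seq ldmul (ldtheta x.1) (ldtheta x.2) | x <- @ldcomul 1%N 1%N a]
  = bzero (ldual (C 2%N)).
Proof.
case: theta_map => _ [_ tR].
apply: ldual_ext => c; rewrite ldual_sumE ldual_zeroE.
transitivity (\sum_(x <- @ldcomul 1%N 1%N a) \sum_(y <- @delC 1%N 1%N c)
                ldev x.1 (bract (theta y.1) (ldev x.2 (theta y.2)))).
  by apply: eq_bigr => x _; rewrite ldmulE; apply: eq_bigr => y _ /=; rewrite tR.
rewrite exchange_big (eq_bigr (fun y => ldev a (mulA (theta y.1) (theta y.2)))).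
  by rewrite -ldev_bsum theta_koszul ldev0.
by move=> y _; rewrite ldcomulE.
Qed.

Lemma ldual_almost_koszul :
  almost_koszul ldmul ldunit ldcomul ldcounit ldtheta.
Proof.
split; first exact: ldual_cgring.
split; first exact: ldual_cgcoring.
by split; [exact: ldtheta_map | split; [exact: ldtheta_bij | exact: ldtheta_koszul]].
Qed.

End LeftGradedDual.

Section RightGradedDual.
Variable bas : forall n, seq (A n * rdual (A n)).
Hypothesis Hbas : forall n, is_rdual_basis (bas n).

Lemma rdmul_balanced2 p q (a : rdual (C p)) (b : rdual (C q)) :
  balanced2 (G := R) (fun u v => rdev b (blact (rdev a u) v)).
Proof.
split; first by move=> m m' n; rewrite rdev_add (Defs.lactDr (blaws _)) rdev_add.
split; first by move=> m n n'; rewrite (Defs.lactDv (blaws _)) rdev_add.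
by move=> m r n; rewrite rdev_ract (Defs.lactM (blaws _)).
Qed.

Lemma rdmul_lin p q (a : rdual (C p)) (b : rdual (C q)) :
  right_lin (fun c => \sum_(x <- @delC p q c) rdev b (blact (rdev a x.1) x.2)).
Proof.
split=> [u v | r v]; first by rewrite (delC_add u v (rdmul_balanced2 a b)) big_cat.
rewrite (delC_ract r v (rdmul_balanced2 a b)) big_map mulr_suml.
by apply: eq_bigr => x _ /=; rewrite -(Defs.lractA (blaws _)) rdev_ract.
Qed.

Definition rdmul p q (a : rdual (C p)) (b : rdual (C q)) : rdual (C (p + q)%N) :=
  exist _ _ (rdmul_lin a b).

Lemma rdmulE p q a b c :
  rdev (@rdmul p q a b) c = \sum_(x <- @delC p q c) rdev b (blact (rdev a x.1) x.2).
Proof. by []. Qed.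

Lemma rdunit_lin (r : R^c) : right_lin (fun c : C 0%N => (r : R) * epsC c).
Proof.
case: epsC_map => eD [_ eR]; split=> *; first by rewrite eD mulrDr.
by rewrite eR mulrA.
Qed.

Definition rdunit (r : R^c) : rdual (C 0%N) := exist _ _ (rdunit_lin r).

Lemma rdcomul_factor_lin p q (a : rdual (A (p + q)%N)) (e : A p) :
  right_lin (fun a2 : A q => rdev a (mulA e a2)).
Proof. by split=> *; rewrite ?mulA_addr ?mulA_ract ?rdev_add ?rdev_ract. Qed.

Definition rdcomul p q (a : rdual (A (p + q)%N)) : seq (rdual (A p) * rdual (A q)) :=
  [seq (e.2, exist _ _ (rdcomul_factor_lin a e.1) : rdual (A q)) | e <- bas p].

Lemma rdcomulE p q a m n :
  \sum_(x <- @rdcomul p q a) rdev x.2 (blact (rdev x.1 m) n) = rdev a (mulA m n).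
Proof.
rewrite big_map [in RHS](@Hbas p m).
rewrite (additive_bsum (f := fun v => rdev a (mulA v n))); last first.
  by move=> u v; rewrite mulA_addl rdev_add.
by apply: eq_bigr => e _ /=; rewrite mulA_balanced.
Qed.

Definition rdcounit (a : rdual (A 0%N)) : R^c := rdev a (etaA 1).

Lemma rdtheta_lin (a : rdual (A 1%N)) : right_lin (fun c => rdev a (theta c)).
Proof. by case: theta_map => tD [_ tR]; split=> *; rewrite ?tD ?tR ?rdev_add ?rdev_ract. Qed.

Definition rdtheta a : rdual (C 1%N) := exist _ _ (rdtheta_lin a).

Lemma rdmul_addl p q (a a' : rdual (C p)) (b : rdual (C q)) :
  rdmul (badd a a') b = badd (rdmul a b) (rdmul a' b).
Proof.
apply: rdual_ext => c; rewrite rdual_addE !rdmulE -big_split; apply: eq_bigr => x _.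
by rewrite rdual_addE (Defs.lactDr (blaws _)) rdev_add.
Qed.

Lemma rdmul_addr p q (a : rdual (C p)) (b b' : rdual (C q)) :
  rdmul a (badd b b') = badd (rdmul a b) (rdmul a b').
Proof. by apply: rdual_ext => c; rewrite rdual_addE !rdmulE -big_split. Qed.

Lemma rdmul_balanced p q r (a : rdual (C p)) (b : rdual (C q)) :
  rdmul (bract a r) b = rdmul a (blact r b).
Proof.
apply: rdual_ext => c; rewrite !rdmulE; apply: eq_bigr => x _.
by rewrite rdual_ractE rdual_lactE (Defs.lactM (blaws _)).
Qed.

Lemma rdmul_lact p q r (a : rdual (C p)) (b : rdual (C q)) :
  rdmul (blact r a) b = blact r (rdmul a b).
Proof.
apply: rdual_ext => c; rewrite rdual_lactE !rdmulE.
by rewrite (delC_lact r c (rdmul_balanced2 a b)) big_map.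
Qed.

Lemma rdmul_ract p q r (a : rdual (C p)) (b : rdual (C q)) :
  rdmul a (bract b r) = bract (rdmul a b) r.
Proof. by apply: rdual_ext => c; rewrite rdual_ractE !rdmulE mulr_sumr. Qed.

Lemma rdmul_balanced3 p q r (a : rdual (C p)) (b : rdual (C q)) (d : rdual (C r)) :
  balanced3 (G := R) (fun m n k => rdev d (blact (rdev b (blact (rdev a m) n)) k)).
Proof.
have lD := Defs.lactDr (blaws _); have lDv := Defs.lactDv (blaws _).
split; first by move=> m m' n k; rewrite rdev_add lD rdev_add lD rdev_add.
split; first by move=> m n n' k; rewrite lDv rdev_add lD rdev_add.
split; first by move=> m n k k'; rewrite lDv rdev_add.
split; first by move=> m s n k; rewrite rdev_ract (Defs.lactM (blaws _)).
by move=> m n s k; rewrite -(Defs.lractA (blaws _)) rdev_ract (Defs.lactM (blaws _)).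
Qed.

Lemma rdmul_assoc p q r (a : rdual (C p)) (b : rdual (C q)) (d : rdual (C r)) :
  rdmul (rdmul a b) d
  = gcast (fun k => rdual (C k) : Type) (addnA p q r) (rdmul a (rdmul b d)).
Proof.
apply: rdual_ext => c; rewrite rdev_gcast !rdmulE.
pose F3 (m : C p) (n : C q) (k : C r) := rdev d (blact (rdev b (blact (rdev a m) n)) k).
transitivity (\sum_(y <- [seq ((u.1, u.2), x.2) | x <- @delC (p + q)%N r c,
                                               u <- @delC p q x.1]) F3 y.1.1 y.1.2 y.2).
  rewrite big_allpairs_dep /=; apply: eq_bigr => x _.
  rewrite (additive_bigsum (g := fun s : R => rdev d (blact s x.2))) //.
  by move=> s s'; rewrite (Defs.lactDr (blaws _)) rdev_add.
rewrite (delC_coassoc c (rdmul_balanced3 a b d)) big_allpairs_dep /=.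
by apply: eq_bigr => x _; rewrite (delC_lact _ x.2 (rdmul_balanced2 b d)) big_map.
Qed.

Lemma rdunit_map : is_bimod_map (V := regular R^c) rdunit.
Proof.
case: epsC_map => _ [eL _].
split; first by move=> r s; apply: rdual_ext => c; rewrite rdual_addE /= mulrDl.
split; first by move=> r s; apply: rdual_ext => c; rewrite rdual_lactE /= eL /= mulrA.
by move=> r s; apply: rdual_ext => c; rewrite rdual_ractE /= mulrA.
Qed.

Lemma rdunit_bij : bijective_map rdunit.
Proof.
case: epsC_map => _ [_ eR]; case: epsC_bij => e_inj e_surj.
have [c1 c1E] := e_surj 1.
split=> [r s /(congr1 (fun f => rdev f c1)) | f]; first by rewrite /= c1E !mulr1.
exists (rdev f c1 : R^c); apply: rdual_ext => c.
have Ec : c = bract c1 (epsC c) by apply: e_inj; rewrite eR /= c1E mul1r.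
by rewrite [in RHS]Ec rdev_ract.
Qed.

Lemma rdmul_unitl q (b : rdual (C q)) : rdmul (rdunit 1) b = b.
Proof.
apply: rdual_ext => c; rewrite rdmulE -[in RHS](delC_counitl c) rdev_bsum.
by apply: eq_bigr => x _ /=; rewrite mul1r.
Qed.

Lemma rdmul_unitr p (a : rdual (C p)) :
  rdmul a (rdunit 1) = gcast (fun k => rdual (C k) : Type) (esym (addn0 p)) a.
Proof.
case: epsC_map => _ [eL _].
apply: rdual_ext => c; rewrite rdev_gcast rdmulE.
rewrite (@gcast_irrelevance (fun k => C k : Type) _ _ (esym (esym _)) (addn0 p)).
rewrite -delC_counitr rdev_bsum.
by apply: eq_bigr => x _ /=; rewrite mul1r eL rdev_ract.
Qed.

Lemma rdual_cgring : is_cgring (A := fun n => rdual (C n)) rdmul rdunit.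
Proof.
split; first exact: rdmul_addl.
split; first exact: rdmul_addr.
split; first exact: rdmul_balanced.
split; first exact: rdmul_lact.
split; first exact: rdmul_ract.
split; first exact: rdmul_assoc.
split; first exact: rdunit_map.
split; first exact: rdunit_bij.
split; first exact: rdmul_unitl.
exact: rdmul_unitr.
Qed.

Lemma rdcomul_add p q (a a' : rdual (A (p + q)%N)) :
  teq (@rdcomul p q (badd a a')) (@rdcomul p q a ++ @rdcomul p q a').
Proof. by apply: (teq_rdual (@Hbas p)) => m n; rewrite big_cat !rdcomulE. Qed.

Lemma rdcomul_lact p q r (a : rdual (A (p + q)%N)) :
  teq (@rdcomul p q (blact r a)) [seq (blact r x.1, x.2) | x <- @rdcomul p q a].
Proof.
apply: (teq_rdual (@Hbas p)) => m n; rewrite rdcomulE big_map.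
by rewrite [RHS](rdcomulE a (blact (r : R) m) n) mulA_lact.
Qed.

Lemma rdcomul_ract p q r (a : rdual (A (p + q)%N)) :
  teq (@rdcomul p q (bract a r)) [seq (x.1, bract x.2 r) | x <- @rdcomul p q a].
Proof.
apply: (teq_rdual (@Hbas p)) => m n; rewrite rdcomulE big_map.
rewrite [RHS](eq_bigr (fun x => (r : R) * rdev x.2 (blact (rdev x.1 m) n))) //.
by rewrite -mulr_sumr rdcomulE.
Qed.

Lemma rdcomul_coassoc p q r (a : rdual (A (p + q + r)%N)) :
  teq3 [seq ((u.1, u.2), x.2) | x <- @rdcomul (p + q)%N r a, u <- @rdcomul p q x.1]
       [seq ((x.1, u.1), u.2) | x <- @rdcomul p (q + r)%N
              (gcast (fun k => rdual (A k) : Type) (esym (addnA p q r)) a),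
                                u <- @rdcomul q r x.2].
Proof.
apply: (teq3_rdual (@Hbas p) (@Hbas q)) => m n k; rewrite !big_allpairs_dep /=.
transitivity (rdev a (mulA (mulA m n) k)).
  rewrite -(@rdcomulE (p + q)%N r a); apply: eq_bigr => x _.
  rewrite -(additive_bigsum (g := fun s : R => rdev x.2 (blact s k))); last first.
    by move=> s s'; rewrite (Defs.lactDr (blaws _)) rdev_add.
  by rewrite rdcomulE.
transitivity (\sum_(x <- @rdcomul p (q + r)%N
              (gcast (fun k => rdual (A k) : Type) (esym (addnA p q r)) a))
                rdev x.2 (blact (rdev x.1 m) (mulA n k))).
  rewrite rdcomulE rdev_gcast mulA_assoc.
  by rewrite (@gcast_irrelevance (fun k => A k : Type) _ _ (esym (esym _)) (addnA p q r)).
by apply: eq_bigr => x _; rewrite rdcomulE mulA_lact.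
Qed.

Lemma rdcounit_map : is_bimod_map (W := regular R^c) rdcounit.
Proof.
split=> //; split=> // r f.
by rewrite /rdcounit rdual_lactE -etaA_lact_ract rdev_ract.
Qed.

Lemma rdcounit_bij : bijective_map rdcounit.
Proof.
case: etaA_map => eD [_ eR]; case: etaA_bij => e_inj e_surj.
have [etaA_inv etaA_invK] := surj_section e_surj.
have etaAE r : etaA r = bract (etaA 1) r by rewrite -eR /= mul1r.
split=> [f g E | r].
  by apply: rdual_ext => v; rewrite -(etaA_invK v) etaAE !rdev_ract; congr (_ * _).
have lin : right_lin (fun v : A 0%N => (r : R) * etaA_inv v).
  split=> [u v | s v]; rewrite -?mulrA -?mulrDr; congr (_ * _); apply: e_inj.
    by rewrite eD /= !etaA_invK.
  by rewrite eR /= !etaA_invK.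
exists (exist _ _ lin); rewrite /rdcounit /=.
have -> : etaA_inv (etaA 1) = 1 by apply: e_inj; rewrite etaA_invK.
by rewrite mulr1.
Qed.

Lemma rdcomul_counitl q (a : rdual (A (0 + q)%N)) :
  bsum [seq blact (rdcounit x.1) x.2 | x <- @rdcomul 0%N q a] = a.
Proof.
by apply: rdual_ext => v; rewrite rdual_sumE -[in RHS](mulA_1l v) -(@rdcomulE 0 q a).
Qed.

Lemma rdcomul_counitr p (a : rdual (A (p + 0)%N)) :
  bsum [seq bract x.1 (rdcounit x.2) | x <- @rdcomul p 0%N a]
  = gcast (fun k => rdual (A k) : Type) (addn0 p) a.
Proof.
apply: rdual_ext => v; rewrite rdual_sumE rdev_gcast -mulA_1r -rdcomulE.
by apply: eq_bigr => x _; rewrite rdual_ractE -etaA_lact_ract rdev_ract.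
Qed.

Lemma rdual_cgcoring : is_cgcoring (C := fun n => rdual (A n)) rdcomul rdcounit.
Proof.
split; first exact: rdcomul_add.
split; first exact: rdcomul_lact.
split; first exact: rdcomul_ract.
split; first exact: rdcomul_coassoc.
split; first exact: rdcounit_map.
split; first exact: rdcounit_bij.
split; first exact: rdcomul_counitl.
exact: rdcomul_counitr.
Qed.

Lemma rdtheta_map : is_bimod_map rdtheta.
Proof.
case: theta_map => _ [tL _].
split; first by move=> a b; apply: rdual_ext.
by split=> r a; apply: rdual_ext => c //=; rewrite tL.
Qed.

Lemma rdtheta_bij : bijective_map rdtheta.
Proof.
case: theta_map => tD [_ tR]; case: theta_bij => t_inj t_surj.
split=> [a b E | g].
  by apply: rdual_ext => v; have [c <-] := t_surj v; apply: (congr1 (fun f => rdev f c) E).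
have [theta_inv theta_invK] := surj_section t_surj.
have lin : right_lin (fun v => rdev g (theta_inv v)).
  split=> [u v | s v]; rewrite -?rdev_add -?rdev_ract; congr rdev; apply: t_inj.
    by rewrite tD !theta_invK.
  by rewrite tR !theta_invK.
exists (exist _ _ lin); apply: rdual_ext => c /=.
by congr rdev; apply: t_inj; rewrite theta_invK.
Qed.

Lemma rdtheta_koszul (a : rdual (A 2%N)) :
  bsum [seq rdmul (rdtheta x.1) (rdtheta x.2) | x <- @rdcomul 1%N 1%N a]
  = bzero (rdual (C 2%N)).
Proof.
case: theta_map => _ [tL _].
apply: rdual_ext => c; rewrite rdual_sumE rdual_zeroE.
transitivity (\sum_(x <- @rdcomul 1%N 1%N a) \sum_(y <- @delC 1%N 1%N c)
                rdev x.2 (blact (rdev x.1 (theta y.1)) (theta y.2))).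
  by apply: eq_bigr => x _; rewrite rdmulE; apply: eq_bigr => y _ /=; rewrite tL.
rewrite exchange_big (eq_bigr (fun y => rdev a (mulA (theta y.1) (theta y.2)))).
  by rewrite -rdev_bsum theta_koszul rdev0.
by move=> y _; rewrite rdcomulE.
Qed.

Lemma rdual_almost_koszul :
  almost_koszul rdmul rdunit rdcomul rdcounit rdtheta.
Proof.
split; first exact: rdual_cgring.
split; first exact: rdual_cgcoring.
by split; [exact: rdtheta_map | split; [exact: rdtheta_bij | exact: rdtheta_koszul]].
Qed.

End RightGradedDual.
End GradedDuals.

Theorem proposition5p1 (R : pzRingType) (HR : semisimple_ring R)
  (A : nat -> bimod R) (mulA : forall p q, A p -> A q -> A (p + q)%N)
  (etaA : R -> A 0%N)
  (C : nat -> bimod R) (delC : forall p q, C (p + q)%N -> seq (C p * C q))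
  (epsC : C 0%N -> R) (theta : C 1%N -> A 1%N)
  (HAC : almost_koszul mulA etaA delC epsC theta) :
  (* left graded duals: ( *-gr C, *-gr A ) is almost-Koszul over R^op *)
  (left_locally_finite A -> left_locally_finite C ->
   exists (mulD : forall p q, ldual (C p) -> ldual (C q) -> ldual (C (p + q)%N))
          (etaD : R^c -> ldual (C 0%N))
          (delD : forall p q, ldual (A (p + q)%N) -> seq (ldual (A p) * ldual (A q)))
          (thetaD : ldual (A 1%N) -> ldual (C 1%N)),
     (forall p q (a : ldual (C p)) (b : ldual (C q)) (c : C (p + q)%N),
        ldev (mulD p q a b) c
        = \sum_(x <- delC p q c) ldev a (bract x.1 (ldev b x.2))) /\
     (forall (r : R^c) (c : C 0%N), ldev (etaD r) c = epsC c * (r : R)) /\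
     (forall p q (a : ldual (A (p + q)%N)) (a1 : A p) (a2 : A q),
        ldev a (mulA p q a1 a2)
        = \sum_(x <- delD p q a) ldev x.1 (bract a1 (ldev x.2 a2))) /\
     (forall (a : ldual (A 1%N)) (c : C 1%N), ldev (thetaD a) c = ldev a (theta c)) /\
     almost_koszul mulD etaD delD (fun a : ldual (A 0%N) => ldev a (etaA 1) : R^c) thetaD)
  /\
  (* right graded duals: ( C *-gr, A *-gr ) is almost-Koszul over R^op *)
  (right_locally_finite A -> right_locally_finite C ->
   exists (mulD : forall p q, rdual (C p) -> rdual (C q) -> rdual (C (p + q)%N))
          (etaD : R^c -> rdual (C 0%N))
          (delD : forall p q, rdual (A (p + q)%N) -> seq (rdual (A p) * rdual (A q)))
          (thetaD : rdual (A 1%N) -> rdual (C 1%N)),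
     (forall p q (a : rdual (C p)) (b : rdual (C q)) (c : C (p + q)%N),
        rdev (mulD p q a b) c
        = \sum_(x <- delC p q c) rdev b (blact (rdev a x.1) x.2)) /\
     (forall (r : R^c) (c : C 0%N), rdev (etaD r) c = (r : R) * epsC c) /\
     (forall p q (a : rdual (A (p + q)%N)) (a1 : A p) (a2 : A q),
        rdev a (mulA p q a1 a2)
        = \sum_(x <- delD p q a) rdev x.2 (blact (rdev x.1 a1) a2)) /\
     (forall (a : rdual (A 1%N)) (c : C 1%N), rdev (thetaD a) c = rdev a (theta c)) /\
     almost_koszul mulD etaD delD (fun a : rdual (A 0%N) => rdev a (etaA 1) : R^c) thetaD).
Proof.
split=> [/(ldual_basis_family HR) [bas Hbas] _ | /(rdual_basis_family HR) [bas Hbas] _].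
- exists (ldmul HAC), (ldunit HAC), (ldcomul HAC bas), (ldtheta HAC).
  split=> //; split=> //; split; first by move=> p q a a1 a2; rewrite ldcomulE.
  by split=> //; apply: ldual_almost_koszul.
- exists (rdmul HAC), (rdunit HAC), (rdcomul HAC bas), (rdtheta HAC).
  split=> //; split=> //; split; first by move=> p q a a1 a2; rewrite rdcomulE.
  by split=> //; apply: rdual_almost_koszul.
Qed.
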